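(* Let $d\ge2$. Let $\mathcal P$ be the set of equivalence classes of $\partial\mathbb Z^{d-1}_{\ge1}$ under the relation $x\sim y$ iff the conditional law of $W_1-W_0$ given $W_0=x$ equals that given $W_0=y$, for the gap process of the SBBS with capacity $c=\infty$ and some error probability $\varepsilon_0\in(0,1)$. Then: (0) $\mathcal P=\{p_1,\dots,p_k\}$ is finite and does not depend on the choice of $\varepsilon_0\in(0,1)$; moreover for every $\varepsilon\in(0,1)$ and every capacity $c\in\{1,2,\dots\}\cup\{\infty\}$ the transition kernel of the gap process is homogeneous on each cell $p_j$, i.e. the conditional law of $W_1-W_0$ given $W_0=x$ is the same for all $x\in p_j$; (i) for each $j$ there exist $x^j\in\partial\mathbb Z^{d-1}_{\ge1}$ and a nonempty $I^j\subseteq\{1,\dots,d-1\}$ with $x^j_i=1$ for $i<\min I^j$, $x^j_{\min I^j}=0$, and $p_j=\{y\in\partial\mathbb Z^{d-1}_{\ge1}: y_i=x^j_i\ (i\in I^j),\ y_i\ge x^j_i\ (i\notin I^j)\}$; (ii) after re-indexing, for each $j\in\{1,\dots,d-1\}$, $p_j=\{y\in\partial\mathbb Z^{d-1}_{\ge1}: y_j=0,\ y_{j+1}\ge2,\ y_i\ge1\text{ for }i\notin\{j,j+1\}\}$ (the condition on $y_{j+1}$ being void when $j=d-1$); (iii) if $c\ge d$, then for any $\varepsilon\in(0,1)$ the transition kernels at points of distinct cells are distinct.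
   Context: Stochastic box-ball system (SBBS). Fix an error probability $\varepsilon\in[0,1]$ and a capacity $c\in\{1,2,\dots\}\cup\{\infty\}$. A configuration is $\zeta\in\{0,1\}^{\mathbb N}$, $\mathbb N=\{1,2,\dots\}$, with finitely many $1$'s (balls). Given $\zeta$, the stochastic carrier process $\Gamma$ is defined by $\Gamma(0)=0$ and recursively (with fresh independent randomness at each $k$): $\Gamma(k)=\Gamma(k-1)+1$ with probability $1-\varepsilon$ (and $\Gamma(k)=\Gamma(k-1)$ otherwise) if $\zeta(k)=1$ and $\Gamma(k-1)<c$; $\Gamma(k)=\Gamma(k-1)-1$ if $\zeta(k)=0$ and $\Gamma(k-1)\ge1$; $\Gamma(k)=\Gamma(k-1)$ otherwise. The new configuration is $\zeta'(k)=\mathbf 1(\Gamma(k)-\Gamma(k-1)=-1)+\mathbf 1(\Gamma(k)=\Gamma(k-1),\ \zeta(k)=1)$. Iterating independently gives the SBBS trajectory. With $d$ balls at positions $\zeta^{(1)}_t<\dots<\zeta^{(d)}_t$, the gap process is $W_t=(W^1_t,\dots,W^{d-1}_t)$, $W^i_t=\zeta^{(i+1)}_t-\zeta^{(i)}_t-1$, a time-homogeneous Markov chain on $\mathbb Z^{d-1}_{\ge0}$ (its transition law is translation invariant in the ball configuration, so depends only on the current gap vector). $\partial\mathbb Z^{d-1}_{\ge1}:=\mathbb Z^{d-1}_{\ge0}\setminus\mathbb Z^{d-1}_{\ge1}$ (gap vectors with at least one zero coordinate). *)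

From HB Require Import structures.
From mathcomp Require Import all_boot all_order all_algebra.
From mathcomp Require Import reals.
Set Implicit Arguments. Unset Strict Implicit. Unset Printing Implicit Defensive.
Import Order.TTheory GRing.Theory Num.Theory.

(* Capacity c in {1,2,...} U {oo}: [Some n] is capacity n, [None] is oo. *)
Definition capacity := option nat.
Definition valid_cap (c : capacity) : bool := if c is Some n then 0 < n else true.
Definition below_cap (c : capacity) (g : nat) : bool :=
  if c is Some n then g < n else true.
Definition cap_ge (c : capacity) (d : nat) : bool :=
  if c is Some n then d <= n else true.

(* Gap vectors in Z^{d-1}_{>=0}; coordinate i : 'I_d.-1 is the paper's i+1. *)
Definition gapvec (d : nat) := 'I_d.-1 -> nat.

Definition bnd d (x : gapvec d) : Prop := exists i, x i = 0%N.

Definition ball_pos d (x : gapvec d) (i : nat) : nat :=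
  (1 + \sum_(j < d.-1 | (j < i)%N) (x j).+1)%N.
Definition config_of d (x : gapvec d) (k : nat) : bool :=
  [exists i : 'I_d, ball_pos x i == k].

(* One deterministic sweep of the carrier over sites k, k+1, ..., given the
   coin outcomes b (b i = true: the i-th ball met is picked up when the carrier
   is not full; this happens with probability 1 - eps).  State: carrier load g,
   number i of balls met so far.  Returns the increasing list of positions of
   the balls of the new configuration zeta' among the swept sites. *)
Fixpoint sweep (c : capacity) (zeta : nat -> bool) (b : nat -> bool)
    (k fuel g i : nat) : seq nat :=
  match fuel with
  | 0 => [::]
  | fuel'.+1 =>
    if zeta k then
      if below_cap c g then
        if b i then sweep c zeta b k.+1 fuel' g.+1 i.+1
        else k :: sweep c zeta b k.+1 fuel' g i.+1
      else k :: sweep c zeta b k.+1 fuel' g i.+1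
    else if (0 < g)%N then k :: sweep c zeta b k.+1 fuel' g.-1 i
    else sweep c zeta b k.+1 fuel' g i
  end.

(* New ball positions after one step (all sites 1 .. last ball + d, beyond
   which the carrier is empty, are swept). *)
Definition new_positions d (c : capacity) (x : gapvec d) (b : {ffun 'I_d -> bool})
  : seq nat :=
  sweep c (config_of x) (fun i => oapp b false (insub i)) 1
        (ball_pos x d.-1 + d.+1) 0 0.

Definition gap_increment d (c : capacity) (x : gapvec d) (b : {ffun 'I_d -> bool})
  (i : 'I_d.-1) : int :=
  let s := new_positions c x b in
  ((nth 0%N s i.+1 - nth 0%N s i).-1)%:Z - (x i)%:Z.

Definition coin_weight (R : realType) d (eps : R) (b : {ffun 'I_d -> bool}) : R :=
  (\prod_(i < d) (if b i then 1 - eps else eps))%R.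

Definition gap_kernel (R : realType) d (eps : R) (c : capacity) (x : gapvec d)
  (z : 'I_d.-1 -> int) : R :=
  (\sum_(b : {ffun 'I_d -> bool})
     coin_weight eps b * ([forall i, gap_increment c x b i == z i])%:R)%R.

Definition law_eq (R : realType) d (eps : R) (c : capacity) (x y : gapvec d) : Prop :=
  forall z, gap_kernel eps c x z = gap_kernel eps c y z.

Definition cls (R : realType) d (eps0 : R) (x y : gapvec d) : Prop :=
  bnd y /\ law_eq eps0 None y x.

(* The explicit cell S_j of part (ii) (j : 'I_d.-1 is the paper's j+1). *)
Definition S_cell d (j : 'I_d.-1) (y : gapvec d) : Prop :=
  y j = 0%N /\
  (forall i : 'I_d.-1, (i : nat) = j.+1 -> (2 <= y i)%N) /\
  (forall i : 'I_d.-1, i != j -> (i : nat) != j.+1 -> (1 <= y i)%N).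

From HB Require Import structures.
From mathcomp Require Import all_boot all_order all_algebra.
From mathcomp Require Import reals.
From mathcomp Require Import zify.
From Stdlib Require Import FunctionalExtensionality.
Set Implicit Arguments. Unset Strict Implicit. Unset Printing Implicit Defensive.
Import Order.TTheory GRing.Theory Num.Theory.

(* After ball n the carrier holds at most max_load x n balls, where
   max_load x 0 = 1 and max_load x (n+1) = max_load x n - x n + 1 (every coin
   says pick up).  If gap j is longer than max_load x j, the carrier is empty
   on its last site whatever the coins and the capacity, so deleting that site
   shifts the rest of the sweep rigidly and changes no increment: the kernel at
   x only depends on its reduction, with coordinates min (x i, max_load x i).
   Conversely, with c = oo and the coins "pick up balls 0, ..., i", gap i is
   closed completely, an increment -x i that a vector with a shorter gap i
   cannot produce; so for 0 < eps < 1 two gap vectors have the same kernel iff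
   they have the same reduction.  The classes are thus indexed by the reduced
   boundary vectors, finitely many since max_load x i <= i + 1, and the class
   of r is {y | min (y i, max_load r i) = r i}: y agrees with r where
   r i < max_load r i and dominates it elsewhere.  A capacity c >= d is never
   reached, since the carrier holds fewer balls than it has met. *)

Definition pick_up (c : capacity) (b : nat -> bool) (i g : nat) : nat :=
  if below_cap c g && b i then g.+1 else g.

Fixpoint sweep_state (c : capacity) (zeta : nat -> bool) (b : nat -> bool)
    (k fuel g i : nat) : nat * nat :=
  match fuel with
  | 0 => (g, i)
  | fuel'.+1 =>
    if zeta k then sweep_state c zeta b k.+1 fuel' (pick_up c b i g) i.+1
    else sweep_state c zeta b k.+1 fuel' g.-1 i
  end.

Section Sweep.
Variables (c : capacity) (z : nat -> bool) (b : nat -> bool).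

Lemma sweep_cat n f k g i :
  sweep c z b k (n + f) g i =
  sweep c z b k n g i ++
  sweep c z b (k + n) f (sweep_state c z b k n g i).1 (sweep_state c z b k n g i).2.
Proof.
elim: n k g i => [|n IH] k g i /=; first by rewrite addn0.
case: (z k) => /=.
- rewrite /pick_up; case: (below_cap c g) => /=; [case: (b i) => /=|]; by rewrite IH addSnnS.
- case: g => [|g] /=; by rewrite IH addSnnS.
Qed.

Lemma sweep_state_cat n f k g i :
  sweep_state c z b k (n + f) g i =
  sweep_state c z b (k + n) f (sweep_state c z b k n g i).1 (sweep_state c z b k n g i).2.
Proof.
elim: n k g i => [|n IH] k g i /=; first by rewrite addn0.
by case: (z k) => /=; rewrite IH addSnnS.
Qed.

Lemma sweep_state_ball k g i : z k -> sweep_state c z b k 1 g i = (pick_up c b i g, i.+1).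
Proof. by move=> /= ->. Qed.

Lemma sweep_state_empty n k g i :
  (forall t, k <= t < k + n -> z t = false) -> sweep_state c z b k n g i = (g - n, i).
Proof.
elim: n k g i => [|n IH] k g i h /=; first by rewrite subn0.
rewrite h; last by lia.
rewrite IH; last by move=> t ht; apply: h; lia.
congr pair; lia.
Qed.

Lemma sweep_empty n k i : z k = false -> sweep c z b k n.+1 0 i = sweep c z b k.+1 n 0 i.
Proof. by move=> /= ->. Qed.

Lemma sweep_balance n k g i :
  size (sweep c z b k n g i) + (sweep_state c z b k n g i).1 + i =
  g + (sweep_state c z b k n g i).2.
Proof.
elim: n k g i => [|n IH] k g i /=; first by [].
case: (z k) => /=; rewrite /pick_up.
- case: (below_cap c g) => /=; [case: (b i) => /=|].
  + by have := IH k.+1 g.+1 i.+1; lia.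
  + by have := IH k.+1 g i.+1; lia.
  + by have := IH k.+1 g i.+1; lia.
- case: g => [|g] /=.
  + by have := IH k.+1 0 i; lia.
  + by have := IH k.+1 g i; lia.
Qed.

Lemma sweep_window n k g i : all (fun t => k <= t < k + n) (sweep c z b k n g i).
Proof.
elim: n k g i => [|n IH] k g i //=.
have h g' i' : all (fun t => k <= t < k + n.+1) (sweep c z b k.+1 n g' i').
  by apply: sub_all (IH k.+1 g' i') => t /=; lia.
case: (z k) => /=; first (case: (below_cap c g) => /=; [case: (b i) => /=|]).
all: try (case: g => [|g] /=).
all: rewrite ?h ?andbT //; lia.
Qed.

Lemma sweep_no_pick_up n k g i :
  (forall t, i <= t -> b t = false) ->
  count (fun t => ~~ z t) (iota k n) <= g ->
  sweep c z b k n g i = iota k n.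
Proof.
elim: n k g i => [|n IH] k g i hb hc //=.
move: hc => /=; case: (z k) => /= hc.
- rewrite hb // if_same IH //.
  by move=> t ht; apply: hb; lia.
- have -> : 0 < g by lia.
  rewrite IH //; lia.
Qed.

End Sweep.

Lemma eq_sweep c z1 z2 b n k g i :
  (forall t, k <= t < k + n -> z1 t = z2 t) ->
  sweep c z1 b k n g i = sweep c z2 b k n g i /\
  sweep_state c z1 b k n g i = sweep_state c z2 b k n g i.
Proof.
elim: n k g i => [|n IH] k g i h //=.
have hk : z1 k = z2 k by apply: h; lia.
have h' : forall t, k.+1 <= t < k.+1 + n -> z1 t = z2 t by move=> t ht; apply: h; lia.
by rewrite hk; case: (z2 k); rewrite ?(IH k.+1 _ _ h').1 ?(IH k.+1 _ _ h').2.
Qed.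

Lemma sweep_shift c z b n k g i :
  sweep c (fun t => z t.+1) b k n g i = map predn (sweep c z b k.+1 n g i).
Proof.
elim: n k g i => [|n IH] k g i //=.
case: (z k.+1) => /=; first (case: (below_cap c g) => /=; [case: (b i) => /=|]).
all: try (case: g => [|g] /=).
all: by rewrite ?IH.
Qed.

(* The carrier never holds more balls than it has met, i.e. fewer than [d],
   so a capacity [c >= d] is never reached. *)
Lemma sweep_cap_ge c (z : nat -> bool) (b : nat -> bool) (d : nat) (P : nat -> nat) :
  {homo P : j j' / j <= j'} -> cap_ge c d ->
  forall n k g i, g <= i ->
  (forall t, k <= t -> z t -> exists2 j, i <= j < d & P j = t) ->
  sweep c z b k n g i = sweep None z b k n g i.
Proof.
move=> P_mono hc; elim=> [|n IH] k g i hg hz //=.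
case hk: (z k).
- have [j hj Pj] := hz k (leqnn k) hk.
  have -> : below_cap c g by move: hc hj hg; clear; case: c => //= m; lia.
  have hz' t : k.+1 <= t -> z t -> exists2 j, i.+1 <= j < d & P j = t.
    move=> ht zt; have [j' hj' Pj'] := hz t (ltnW ht) zt.
    exists j' => //; apply/andP; split; last by case/andP: hj'.
    case: (ltnP j j') => hjj; first by case/andP: hj => ? _; lia.
    have := P_mono _ _ hjj; lia.
  by case: (b i); rewrite (IH _ _ _ _ hz') //; lia.
- have hz' t : k.+1 <= t -> z t -> exists2 j, i <= j < d & P j = t.
    by move=> ht zt; exact: hz t (ltnW ht) zt.
  by case: g hg => [|g] hg /=; rewrite IH //; lia.
Qed.

Section Configuration.
Variable d : nat.
Implicit Types x : gapvec d.

(* Gaps and coins indexed by [nat], with junk values outside the range. *)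
Definition gap_at x n : nat := oapp x 0 (insub n).
Definition coin_at (b : {ffun 'I_d -> bool}) n : bool := oapp b false (insub n).

Lemma gap_atE x (i : 'I_d.-1) : gap_at x i = x i.
Proof. by rewrite /gap_at valK. Qed.

Lemma ball_pos0 x : ball_pos x 0 = 1.
Proof. by rewrite /ball_pos big1 // => j; rewrite ltn0. Qed.

Lemma ball_posS x n :
  ball_pos x n.+1 = ball_pos x n + (if n < d.-1 then (gap_at x n).+1 else 0).
Proof.
rewrite /ball_pos -addnA; congr (_ + _).
rewrite big_mkcond [in RHS]big_mkcond /=.
have -> : \sum_(i < d.-1) (if i < n.+1 then (x i).+1 else 0) =
          \sum_(i < d.-1) ((if i < n then (x i).+1 else 0) +
                           (if val i == n then (x i).+1 else 0)).
  apply: eq_bigr => i _; rewrite ltnS leq_eqVlt orbC.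
  case h1: (i < n); case h2: (val i == n) => //=; rewrite ?addn0 //; lia.
rewrite big_split /=; congr (_ + _).
case: ltnP => hn.
- rewrite (bigD1 (Ordinal hn)) //= eqxx big1 ?addn0; first by rewrite (gap_atE x (Ordinal hn)).
  move=> i /negbTE hi; case: eqP => // hin; move: hi; rewrite -val_eqE /= hin eqxx //.
- by rewrite big1 // => i _; case: eqP => // hin; have := ltn_ord i; lia.
Qed.

Lemma ball_pos_next x (j : 'I_d.-1) : ball_pos x j.+1 = ball_pos x j + (x j).+1.
Proof. by rewrite ball_posS ltn_ord gap_atE. Qed.

Lemma ball_pos_mono x : {homo ball_pos x : m n / m <= n}.
Proof.
move=> m n /subnK <-; elim: (n - m) => [|k IH]; first by rewrite add0n.
by rewrite addSn ball_posS; lia.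
Qed.

Lemma ball_pos_gt0 x n : 0 < ball_pos x n.
Proof. by have := ball_pos_mono x (leq0n n); rewrite ball_pos0. Qed.

Lemma config_ball x j : j < d -> config_of x (ball_pos x j).
Proof. by move=> hj; apply/existsP; exists (Ordinal hj). Qed.

Lemma config_ballP x t : config_of x t -> exists2 j, j < d & ball_pos x j = t.
Proof. by case/existsP=> j /eqP <-; exists j. Qed.

Lemma config_gap x j t :
  j < d.-1 -> ball_pos x j < t < ball_pos x j.+1 -> config_of x t = false.
Proof.
move=> hj ht; apply/negbTE/negP => /config_ballP [i hi Pi].
by case: (leqP i j) => hij; have := ball_pos_mono x hij; lia.
Qed.

Lemma config_end x t : ball_pos x d.-1 < t -> config_of x t = false.
Proof.
move=> ht; apply/negbTE/negP => /config_ballP [i hi Pi].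
have : i <= d.-1 by lia.
move/(ball_pos_mono x); lia.
Qed.

Fixpoint max_load x n : nat :=
  if n is n'.+1 then (max_load x n' - gap_at x n').+1 else 1.

(* The carrier load when reaching ball [n]. *)
Fixpoint load c x (b : nat -> bool) n : nat :=
  if n is n'.+1 then pick_up c b n' (load c x b n') - gap_at x n' else 0.

Lemma max_load_gt0 x n : 0 < max_load x n. Proof. by case: n. Qed.

Lemma max_load_le x n : max_load x n <= n.+1.
Proof. by elim: n => //= n IH; lia. Qed.

Lemma max_load_eq1 x t :
  (forall n, n < t -> gap_at x n != 0) -> max_load x t = 1.
Proof.
elim: t => //= t IH h; rewrite IH => [|n hn]; last by apply: h; lia.
by have := h t (ltnSn t); lia.
Qed.

Lemma pick_up_le c bb i g : pick_up c bb i g <= g.+1.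
Proof. by rewrite /pick_up; case: ifP. Qed.

Lemma pick_up_load_le c x bb n : pick_up c bb n (load c x bb n) <= max_load x n.
Proof.
elim: n => [|n IH] /=; first exact: pick_up_le.
have := pick_up_le c bb n.+1 (pick_up c bb n (load c x bb n) - gap_at x n); lia.
Qed.

Lemma sweep_state_to_ball c x bb j : j < d ->
  sweep_state c (config_of x) bb 1 (ball_pos x j) 0 0 =
  (pick_up c bb j (load c x bb j), j.+1).
Proof.
elim: j => [|j IH] hj; first by rewrite ball_pos0 sweep_state_ball // -(ball_pos0 x) config_ball.
have hj' : j < d.-1 by lia.
have hP := ball_pos_gt0 x j.
have -> : ball_pos x j.+1 = ball_pos x j + gap_at x j + 1.
  by rewrite ball_posS hj'; lia.
rewrite sweep_state_cat (sweep_state_cat _ _ _ (ball_pos x j)) IH 1?ltnW //.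
rewrite sweep_state_ball; last first.
  have -> : 1 + (ball_pos x j + gap_at x j) = ball_pos x j.+1 by rewrite ball_posS hj'; lia.
  exact: config_ball.
rewrite sweep_state_empty // => t ht.
by apply: (config_gap hj'); rewrite ball_posS hj'; lia.
Qed.

Definition sweep_length x := ball_pos x d.-1 + d.+1.

Lemma new_positionsE c x b :
  new_positions c x b = sweep c (config_of x) (coin_at b) 1 (sweep_length x) 0 0.
Proof. by []. Qed.

Lemma size_new_positions c x b : 0 < d -> size (new_positions c x b) = d.
Proof.
move=> d0; have := sweep_balance c (config_of x) (coin_at b) (sweep_length x) 1 0 0.
rewrite -new_positionsE /sweep_length sweep_state_cat sweep_state_to_ball ?prednK //.
rewrite sweep_state_empty; last by move=> t ht; apply: config_end; lia.
by have := pick_up_load_le c x (coin_at b) d.-1; have := max_load_le x d.-1; simpl; lia.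
Qed.

Lemma new_positions_cap_ge c x b :
  cap_ge c d -> new_positions c x b = new_positions None x b.
Proof.
move=> hc; rewrite !new_positionsE.
apply: (@sweep_cap_ge c _ _ d _ (ball_pos_mono x) hc) => // t _.
by case/config_ballP=> j hj <-; exists j.
Qed.

End Configuration.

Definition seq_gap (s : seq nat) (i : nat) : nat := (nth 0 s i.+1 - nth 0 s i).-1.

Lemma gap_incrementE d c (x : gapvec d) b i :
  gap_increment c x b i = ((seq_gap (new_positions c x b) i)%:Z - (x i)%:Z)%R.
Proof. by []. Qed.

Lemma seq_gap_cat_predn (A B : seq nat) K j i :
  size A = j.+1 -> all (fun t => t < K) A -> all (fun t => K < t) B -> 0 < size B ->
  seq_gap (A ++ map predn B) i + (i == j) = seq_gap (A ++ B) i.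
Proof.
move=> hA aA aB hB.
have inA n : n < size A -> nth 0 A n < K by move=> hn; exact: (allP aA) _ (mem_nth 0 hn).
have inB n : n < size B -> K < nth 0 B n by move=> hn; exact: (allP aB) _ (mem_nth 0 hn).
have nth_predn n : nth 0 (map predn B) n = (nth 0 B n).-1.
  by case: (ltnP n (size B)) => h; [rewrite (nth_map 0) | rewrite !nth_default ?size_map].
rewrite /seq_gap !nth_cat !nth_predn hA.
case: (ltngtP i j) => hij.
- by rewrite !ifT ?addn0 //; lia.
- rewrite !ifF ?addn0; try lia.
  have -> : i.+1 - j.+1 = (i - j.+1).+1 by lia.
  case: (ltnP (i - j.+1).+1 (size B)) => h1.
  + have /inB : i - j.+1 < size B by lia.
    by have := inB _ h1; lia.
  + by rewrite (nth_default 0 h1); lia.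
- subst i; rewrite ltnn ltnSn subnn.
  have /inA : j < size A by lia.
  by have := inB 0 hB; lia.
Qed.

Section Shorten.
Variable d : nat.
Implicit Types x : gapvec d.

Definition shorten x (j : 'I_d.-1) : gapvec d :=
  fun i => if i == j then (x i).-1 else x i.

Lemma gap_at_shorten x (j : 'I_d.-1) n :
  gap_at (shorten x j) n = if n == j then (gap_at x n).-1 else gap_at x n.
Proof.
rewrite /gap_at; case: insubP => [u _ <-|hn] /=; first by rewrite /shorten -val_eqE.
by case: eqP => // hnj; move: hn; rewrite hnj ltn_ord.
Qed.

Lemma ball_pos_shorten x (j : 'I_d.-1) n :
  0 < x j -> ball_pos (shorten x j) n + (j < n) = ball_pos x n.
Proof.
move=> hx; elim: n => [|n IH]; first by rewrite !ball_pos0.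
rewrite !ball_posS gap_at_shorten -IH.
case: eqP => [->|hn]; first by rewrite ltn_ord ltnn ltnSn gap_atE; lia.
have -> : (j < n.+1) = (j < n) by apply/idP/idP; lia.
by case: (n < d.-1); lia.
Qed.

Lemma config_shorten_lt x (j : 'I_d.-1) t : 0 < x j -> t < ball_pos x j + x j ->
  config_of (shorten x j) t = config_of x t.
Proof.
move=> hx ht; apply: eq_existsb => i.
have := ball_pos_shorten i hx; have := ball_pos_next x j.
case: (leqP i j) => hij; last by have := ball_pos_mono x hij; move=> *; apply/eqP/eqP; lia.
by move=> _; rewrite addn0 => ->.
Qed.

Lemma config_shorten_ge x (j : 'I_d.-1) t : 0 < x j -> ball_pos x j + x j <= t ->
  config_of (shorten x j) t = config_of x t.+1.
Proof.
move=> hx ht; apply: eq_existsb => i.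
have := ball_pos_shorten i hx.
case: (leqP i j) => hij; last by move=> E; apply/eqP/eqP; lia.
by have := ball_pos_mono x hij => *; apply/eqP/eqP; lia.
Qed.

Lemma max_load_shorten x (j : 'I_d.-1) n :
  max_load x j < x j -> max_load (shorten x j) n = max_load x n.
Proof.
move=> h; elim: n => //= n ->; rewrite gap_at_shorten.
by case: eqP => // ->; rewrite gap_atE; lia.
Qed.

Lemma sum_shorten x (j : 'I_d.-1) :
  0 < x j -> (\sum_(i < d.-1) shorten x j i).+1 = \sum_(i < d.-1) x i.
Proof.
move=> h; rewrite (bigD1 j) // [in RHS](bigD1 j) //= /shorten eqxx.
rewrite (eq_bigr (fun i => x i)); last by move=> i /negbTE ->.
lia.
Qed.

End Shorten.

(* If gap [j] exceeds [max_load x j], the carrier is empty on the last site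
   [K] of that gap whatever the coins: the sweep splits at [K], and removing
   one empty site of gap [j] shifts the rest of the sweep one site left. *)
Section LongGap.
Variables (d : nat) (c : capacity) (x : gapvec d) (j : 'I_d.-1) (b : {ffun 'I_d -> bool}).
Hypothesis long_gap : max_load x j < x j.

Let K := ball_pos x j + x j.
Let zx := config_of x.
Let prefix := sweep c zx (coin_at b) 1 K.-1 0 0.
Let suffix := sweep c zx (coin_at b) K.+1 (sweep_length x - K) 0 j.+1.

Let gap_pos : 0 < x j.
Proof. by have := max_load_gt0 x j; lia. Qed.

Let empty_K t : ball_pos x j < t <= K -> zx t = false.
Proof. by move=> ht; apply: (config_gap (ltn_ord j)); rewrite ball_pos_next /K; lia. Qed.

Let K_lt_last_ball : K.+1 <= ball_pos x d.-1.
Proof.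
by rewrite /K -addnS -ball_pos_next; apply: ball_pos_mono; have := ltn_ord j; lia.
Qed.

Let sweep_state_prefix : sweep_state c zx (coin_at b) 1 K.-1 0 0 = (0, j.+1).
Proof.
have -> : K.-1 = ball_pos x j + (x j).-1 by rewrite /K; lia.
rewrite sweep_state_cat sweep_state_to_ball ?(leq_trans (ltn_ord j)) ?leq_pred //=.
rewrite sweep_state_empty => [|t ht]; last by apply: empty_K; lia.
by have h := pick_up_load_le c x (coin_at b) j; congr pair; lia.
Qed.

Let size_prefix : size prefix = j.+1.
Proof.
have := sweep_balance c zx (coin_at b) K.-1 1 0 0.
by rewrite sweep_state_prefix -/prefix /=; lia.
Qed.

Let prefix_lt : all (fun t => t < K) prefix.
Proof. by apply: sub_all (sweep_window _ _ _ K.-1 1 0 0) => t /andP [_]; lia. Qed.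

Let suffix_gt : all (fun t => K < t) suffix.
Proof. by apply: sub_all (sweep_window _ _ _ _ K.+1 0 j.+1) => t /andP []; lia. Qed.

Let new_positions_long_gap : new_positions c x b = prefix ++ suffix.
Proof.
rewrite new_positionsE.
have -> : sweep_length x = K.-1 + (sweep_length x - K).+1 by rewrite /sweep_length; lia.
rewrite sweep_cat sweep_state_prefix add1n prednK //.
by rewrite sweep_empty //; apply: empty_K; have := ball_pos_gt0 x j; lia.
Qed.

Let new_positions_shorten : new_positions c (shorten x j) b = prefix ++ map predn suffix.
Proof.
have same_prefix t : 1 <= t < 1 + K.-1 -> config_of (shorten x j) t = zx t.
  by move=> ht; apply: config_shorten_lt => //; rewrite -/K; lia.
have shifted_suffix t :
    K <= t < K + (sweep_length x - K) -> config_of (shorten x j) t = zx t.+1.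
  by move=> ht; apply: config_shorten_ge => //; rewrite -/K; lia.
rewrite new_positionsE.
have -> : sweep_length (shorten x j) = K.-1 + (sweep_length x - K).
  by have := ball_pos_shorten d.-1 gap_pos; rewrite ltn_ord /sweep_length; lia.
rewrite sweep_cat (eq_sweep _ _ _ _ same_prefix).1 (eq_sweep _ _ _ _ same_prefix).2.
rewrite sweep_state_prefix add1n prednK //.
by rewrite (@eq_sweep c _ (fun t => zx t.+1) _ _ _ _ _ shifted_suffix).1 sweep_shift.
Qed.

Lemma gap_increment_shorten : gap_increment c (shorten x j) b =1 gap_increment c x b.
Proof.
have suffix_nonempty : 0 < size suffix.
  have d_gt0 : 0 < d by have := ltn_ord j; lia.
  have := size_new_positions c x b d_gt0.
  by rewrite new_positions_long_gap size_cat size_prefix; have := ltn_ord j; lia.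
move=> i; rewrite !gap_incrementE new_positions_long_gap new_positions_shorten.
have := seq_gap_cat_predn i size_prefix prefix_lt suffix_gt suffix_nonempty.
rewrite /shorten val_eqE; case: (i =P j) => [->|_]; last by rewrite addn0 => ->.
by rewrite addn1 => <-; move: gap_pos; case: (x j) => //= n _; lia.
Qed.

End LongGap.

Section Reduce.
Variable d : nat.
Implicit Types x y : gapvec d.

Definition reduce x : gapvec d := fun i => minn (x i) (max_load x i).
Definition reduced x := forall i : 'I_d.-1, x i <= max_load x i.

Lemma max_load_reduce x n : max_load (reduce x) n = max_load x n.
Proof.
elim: n => //= n ->.
suff -> : gap_at (reduce x) n = minn (gap_at x n) (max_load x n) by lia.
by rewrite /gap_at; case: insubP => [u _ <-|_] /=; rewrite ?min0n.
Qed.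

Lemma reduce_reduced x : reduced (reduce x).
Proof. by move=> i; rewrite max_load_reduce /reduce geq_minr. Qed.

Lemma reduced_id x : reduced x -> reduce x = x.
Proof. by move=> h; apply: functional_extensionality => i; apply/minn_idPl. Qed.

Lemma reduce_idem x : reduce (reduce x) = reduce x.
Proof. exact: reduced_id (reduce_reduced x). Qed.

Lemma bnd_reduce x : bnd x -> bnd (reduce x).
Proof. by case=> i hi; exists i; rewrite /reduce hi min0n. Qed.

Lemma reduce_shorten x (j : 'I_d.-1) : max_load x j < x j -> reduce (shorten x j) = reduce x.
Proof.
move=> h; apply: functional_extensionality => i; rewrite /reduce max_load_shorten // /shorten.
by case: eqP => // ->; lia.
Qed.

Lemma gap_increment_reduce c b x : gap_increment c x b =1 gap_increment c (reduce x) b.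
Proof.
move: {2}(\sum_(i < d.-1) x i) (leqnn (\sum_(i < d.-1) x i)) => n.
elim: n x => [|n IH] x hs.
  rewrite reduced_id // => i; have := max_load_gt0 x i.
  have : x i <= \sum_(i < d.-1) x i by rewrite (bigD1 i) //=; lia.
  lia.
have [/forallP hr|] := boolP [forall i, x i <= max_load x i]; first by rewrite reduced_id.
rewrite negb_forall => /existsP [j]; rewrite -ltnNge => hj i.
rewrite -(gap_increment_shorten c b hj) -(reduce_shorten hj) IH //.
by have := sum_shorten (leq_ltn_trans (leq0n _) hj); lia.
Qed.

Lemma law_eq_reduce (R : realType) (eps : R) c x y :
  reduce x = reduce y -> law_eq eps c x y.
Proof.
have kernel_reduce v z : gap_kernel eps c v z = gap_kernel eps c (reduce v) z.
  apply: eq_bigr => b _; congr (_ * (nat_of_bool _)%:R)%R.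
  by apply: eq_forallb => i; rewrite gap_increment_reduce.
by move=> h z; rewrite kernel_reduce h -kernel_reduce.
Qed.

End Reduce.

(* With unbounded capacity and the coins "pick up balls 0, ..., i", the
   carrier leaves ball [i] with load [max_load x i >= x i] and fills the next
   [max_load x i + 1] sites: the new gap [i] is empty. *)
Section PickUpTo.
Variables (d : nat) (x : gapvec d) (i : 'I_d.-1).
Hypothesis short_gap : x i <= max_load x i.

Definition pick_upto : {ffun 'I_d -> bool} := [ffun t : 'I_d => t <= i].

Let L := max_load x i.
Let zx := config_of x.
Let bb := coin_at pick_upto.

Let coin_at_pick_upto t : bb t = (t <= i).
Proof.
rewrite /bb /coin_at; case: insubP => [u _ <-|ht] /=; first by rewrite ffunE.
by apply/esym/negbTE; move: ht; have := ltn_ord i; lia.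
Qed.

Let load_pick_upto t : t <= i -> pick_up None bb t (load None x bb t) = max_load x t.
Proof.
elim: t => [|t IH] ht; first by rewrite /pick_up coin_at_pick_upto.
by rewrite /= {1}/pick_up coin_at_pick_upto ht /= IH 1?ltnW.
Qed.

Let sweep_fill :
  sweep None zx bb (1 + ball_pos x i) L.+1 L i.+1 = iota (1 + ball_pos x i) L.+1.
Proof.
apply: sweep_no_pick_up => [t ht|]; first by rewrite coin_at_pick_upto; lia.
have next_ball : 0 < count zx (iota (1 + ball_pos x i) L.+1).
  rewrite -has_count; apply/hasP; exists (ball_pos x i.+1).
    by rewrite mem_iota ball_pos_next; lia.
  by apply: config_ball; have := ltn_ord i; lia.
have := count_predC zx (iota (1 + ball_pos x i) L.+1).
rewrite size_iota -[count (fun t => ~~ zx t) _]/(count (predC zx) _).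
by move: next_ball; lia.
Qed.

Lemma gap_increment_pick_upto : gap_increment None x pick_upto i = (- (x i)%:Z)%R.
Proof.
have hi := ltn_ord i.
have hL1 := max_load_gt0 x i; have hL2 := max_load_le x i.
have state_i : sweep_state None zx bb 1 (ball_pos x i) 0 0 = (L, i.+1).
  by rewrite sweep_state_to_ball ?load_pick_upto //; lia.
set A := sweep None zx bb 1 (ball_pos x i) 0 0.
have hA : size A = i.+1 - L.
  by have := sweep_balance None zx bb (ball_pos x i) 1 0 0; rewrite state_i -/A /=; lia.
rewrite gap_incrementE new_positionsE.
have [f ->] : exists f, sweep_length x = ball_pos x i + (L.+1 + f).
  exists (sweep_length x - (ball_pos x i + L.+1)).
  by have := ball_pos_mono x (ltnW hi); rewrite /sweep_length; lia.
rewrite sweep_cat -/bb -/zx -/A state_i sweep_cat sweep_fill.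
rewrite /seq_gap !nth_cat hA size_iota.
have -> : (i < i.+1 - L) = false by lia.
have -> : (i.+1 < i.+1 - L) = false by lia.
by rewrite !ifT ?nth_iota; lia.
Qed.

End PickUpTo.

Section Kernel.
Variables (R : realType) (d : nat).
Implicit Types x y : gapvec d.
Local Open Scope ring_scope.

Lemma law_eq_cap_ge (eps : R) c x y :
  cap_ge c d -> law_eq eps c x y -> law_eq eps None x y.
Proof.
move=> hc.
have kernel_cap (v : gapvec d) z : gap_kernel eps c v z = gap_kernel eps None v z.
  apply: eq_bigr => b _; congr (_ * (nat_of_bool _)%:R).
  by apply: eq_forallb => i; rewrite !gap_incrementE new_positions_cap_ge.
by move=> h z; rewrite -!kernel_cap.
Qed.

Lemma gap_kernel_gt0 (eps : R) c x b :
  0 < eps < 1 -> 0 < gap_kernel eps c x (gap_increment c x b).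
Proof.
case/andP=> eps_gt0 eps_lt1.
have weight_gt0 (b' : {ffun 'I_d -> bool}) : 0 < coin_weight eps b'.
  by apply: prodr_gt0 => i _; case: ifP; rewrite ?subr_gt0.
rewrite /gap_kernel (bigD1 b) //= (introT forallP (fun i => eqxx _)) mulr1.
apply: (lt_le_trans (weight_gt0 b)); rewrite lerDl.
by apply: sumr_ge0 => b' _; rewrite mulr_ge0 // ltW.
Qed.

Lemma gap_kernel_eq0 (eps : R) c x z :
  (forall b, exists i, gap_increment c x b i != z i) -> gap_kernel eps c x z = 0.
Proof.
move=> h; rewrite /gap_kernel big1 // => b _; have [i hi] := h b.
suff /negbTE -> : ~~ [forall i, gap_increment c x b i == z i] by rewrite mulr0.
by rewrite negb_forall; apply/existsP; exists i.
Qed.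

Lemma gap_increment_ge c x b i : - (x i)%:Z <= gap_increment c x b i.
Proof. by rewrite gap_incrementE; lia. Qed.

(* The outcome [pick_upto i] gives [y] the increment [- y i] at [i], which
   [x] with a shorter gap [i] cannot produce. *)
Lemma law_neq_gap_lt (eps : R) x y (i : 'I_d.-1) :
  0 < eps < 1 -> (y i <= max_load y i)%N -> (x i < y i)%N -> ~ law_eq eps None x y.
Proof.
move=> he hy hxy /(_ (gap_increment None y (pick_upto i))).
rewrite gap_kernel_eq0 => [|b]; last first.
  exists i; rewrite gap_increment_pick_upto //; apply/eqP => e.
  by have := gap_increment_ge None x b i; rewrite e; lia.
by move=> e; have := gap_kernel_gt0 None y (pick_upto i) he; rewrite -e ltxx.
Qed.

Lemma law_eqE (eps : R) x y :
  0 < eps < 1 -> law_eq eps None x y <-> reduce x = reduce y.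
Proof.
move=> he; split=> [h|]; last exact: law_eq_reduce.
have hr : law_eq eps None (reduce x) (reduce y).
  have reduce_law v : law_eq eps None (reduce v) v by apply: law_eq_reduce; rewrite reduce_idem.
  by move=> z; rewrite reduce_law h -reduce_law.
apply: functional_extensionality => i.
case: (ltngtP (reduce x i) (reduce y i)) => // hi; exfalso.
- exact: law_neq_gap_lt he (reduce_reduced y i) hi hr.
- by apply: (law_neq_gap_lt he (reduce_reduced x i) hi) => z; rewrite hr.
Qed.

End Kernel.

Section Classes.
Variable d : nat.
Implicit Types x y r : gapvec d.

Lemma reduce_eqE r y :
  reduced r -> reduce y = r <-> forall i, minn (y i) (max_load r i) = r i.
Proof.
move=> hr; split=> [<- i|h]; first by rewrite max_load_reduce.
have same_load n : max_load y n = max_load r n.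
  elim: n => //= n ->.
  suff -> : gap_at r n = minn (gap_at y n) (max_load r n) by lia.
  by rewrite /gap_at; case: insubP => [u _ <-|_] /=; rewrite ?h ?min0n.
by apply: functional_extensionality => i; rewrite /reduce same_load h.
Qed.

Lemma clsE (R : realType) (eps : R) r y : (0 < eps < 1)%R -> reduced r ->
  cls eps r y <-> bnd y /\ forall i, minn (y i) (max_load r i) = r i.
Proof.
move=> he hr; rewrite /cls (law_eqE _ _ he) (reduced_id hr).
by split=> [[? /(reduce_eqE _ hr)]|[? /(reduce_eqE _ hr)]].
Qed.

Definition class_code := {ffun 'I_d.-1 -> 'I_d.+1}.
Definition decode (f : class_code) : gapvec d := fun i => f i.

(* Reduced vectors have coordinates [x i <= max_load x i <= d], so they are
   the decodings of a finite set of codes. *)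
Definition class_codes : {set class_code} :=
  [set f | [forall i, decode f i <= max_load (decode f) i] && [exists i, decode f i == 0]].

Definition class_rep (j : 'I_#|class_codes|) : gapvec d := decode (enum_val j).

Lemma class_rep_reduced j : reduced (class_rep j).
Proof. by have := enum_valP j; rewrite inE => /andP [/forallP]. Qed.

Lemma class_rep_bnd j : bnd (class_rep j).
Proof. by have := enum_valP j; rewrite inE => /andP [_ /existsP [i /eqP]]; exists i. Qed.

Lemma class_rep_inj : injective class_rep.
Proof.
move=> j m e; apply: enum_val_inj; apply/ffunP => i; apply: val_inj.
exact: (congr1 (fun x => x i) e).
Qed.

Lemma class_repP x : reduced x -> bnd x -> exists j, class_rep j = x.
Proof.
move=> hr [i0 hi0].
have x_lt i : x i < d.+1 by have := hr i; have := max_load_le x i; have := ltn_ord i; lia.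
have decodeK : decode [ffun i => Ordinal (x_lt i)] = x.
  by apply: functional_extensionality => i; rewrite /decode ffunE.
have code_in : [ffun i => Ordinal (x_lt i)] \in class_codes.
  rewrite inE decodeK; apply/andP; split; first exact/forallP.
  by apply/existsP; exists i0; rewrite hi0.
by exists (enum_rank_in code_in [ffun i => Ordinal (x_lt i)]); rewrite /class_rep enum_rankK_in.
Qed.

End Classes.

(* The free coordinates of the cell of [r] are those where [r] reaches
   [max_load r]; before the first zero of [r] they are all equal to [1]. *)
Lemma cell_shape (R : realType) (eps : R) d (r : gapvec d) :
  (0 < eps < 1)%R -> reduced r -> bnd r ->
  exists (xj : gapvec d) (I : {set 'I_d.-1}) (m : 'I_d.-1),
    bnd xj /\ m \in I /\ (forall i, i \in I -> m <= i) /\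
    (forall i : 'I_d.-1, i < m -> xj i = 1) /\ xj m = 0 /\
    (forall y : gapvec d, cls eps r y <->
       (bnd y /\ forall i, (i \in I -> y i = xj i) /\ (i \notin I -> xj i <= y i))).
Proof.
move=> he hr [i0 hi0].
case: (@arg_minnP _ i0 (fun i => r i == 0) (@nat_of_ord _) (introT eqP hi0)) => m /eqP rm0 m_min.
have before_m (i : 'I_d.-1) : i < m -> r i = 1 /\ max_load r i = 1.
  move=> him; have r_i : r i != 0 by apply/negP => /m_min; lia.
  have load_i : max_load r i = 1.
    apply: max_load_eq1 => n hn; have n_lt : n < d.-1 by have := ltn_ord i; lia.
    by rewrite -[n]/(nat_of_ord (Ordinal n_lt)) gap_atE; apply/negP => /m_min /=; lia.
  by have := hr i; rewrite load_i; lia.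
exists r, [set i | r i < max_load r i], m; split; first by exists i0.
split; first by rewrite inE rm0 max_load_gt0.
split.
  move=> i; rewrite inE; case: (ltnP i m) => // him.
  by have [-> ->] := before_m i him.
split; first by move=> i /before_m [].
split=> // y; rewrite clsE //; split=> -[hb h]; split=> // i;
  by have := h i; rewrite ?inE; have := hr i; lia.
Qed.

Section SCell.
Variables (d : nat) (j : 'I_d.-1).

Definition S_cell_rep : gapvec d :=
  fun i => if (i : nat) == j then 0 else if (i : nat) == j.+1 then 2 else 1.

Lemma max_load_S_cell_rep (i : 'I_d.-1) :
  max_load S_cell_rep i = if (i : nat) == j.+1 then 2 else 1.
Proof.
case: i => /= n; elim: n => [|n IH] hn //=.
rewrite IH 1?ltnW // -[n]/(nat_of_ord (Ordinal (ltnW hn))) gap_atE /S_cell_rep /=.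
by do ![case: eqP => ?]; lia.
Qed.

Lemma S_cell_rep_reduced : reduced S_cell_rep.
Proof. by move=> i; rewrite max_load_S_cell_rep /S_cell_rep; do ![case: eqP => ?]. Qed.

Lemma S_cell_rep_bnd : bnd S_cell_rep.
Proof. by exists j; rewrite /S_cell_rep eqxx. Qed.

Lemma S_cell_repE y :
  (bnd y /\ forall i, minn (y i) (max_load S_cell_rep i) = S_cell_rep i) <-> S_cell j y.
Proof.
have cell_at i : minn (y i) (max_load S_cell_rep i) = S_cell_rep i <->
    [/\ (i : nat) = j -> y i = 0, (i : nat) = j.+1 -> 2 <= y i &
        (i : nat) != j -> (i : nat) != j.+1 -> 1 <= y i].
  rewrite max_load_S_cell_rep /S_cell_rep.
  by case: eqP => ?; case: eqP => ?; split=> [h|[ha hb hc]]; try split; lia.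
split=> [[_ h]|[h0 [h2 h1]]].
- have cell i := (cell_at i).1 (h i).
  split; first by case: (cell j) => h0 _ _; apply: h0.
  split=> [i|i]; first by case: (cell i).
  by rewrite -val_eqE; case: (cell i).
split; first by exists j.
move=> i; apply/cell_at; split=> [/val_inj ->|/h2 //|hij]; first exact: h0.
by apply: h1; rewrite -val_eqE.
Qed.

End SCell.

Local Open Scope ring_scope.

Theorem lemma6p2 (R : realType) (d : nat) (eps0 : R) :
  (2 <= d)%N -> 0 < eps0 < 1 ->
  exists (k : nat) (r : 'I_k -> gapvec d),
    (* r enumerates representatives of the classes, one per class *)
    (forall j, bnd (r j)) /\
    (forall x : gapvec d, bnd x -> exists j, law_eq eps0 None x (r j)) /\
    (forall j m, law_eq eps0 None (r j) (r m) -> j = m) /\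
    (* (0) the partition does not depend on eps0 *)
    (forall eps1 : R, 0 < eps1 < 1 -> forall x y : gapvec d, bnd x -> bnd y ->
        (law_eq eps0 None x y <-> law_eq eps1 None x y)) /\
    (* (0) homogeneity on each cell, for all eps and all capacities *)
    (forall (eps : R) (c : capacity), 0 < eps < 1 -> valid_cap c ->
        forall x y : gapvec d, bnd x -> bnd y -> law_eq eps0 None x y -> law_eq eps c x y) /\
    (* (i) shape of the cells *)
    (forall j, exists (xj : gapvec d) (I : {set 'I_d.-1}) (m : 'I_d.-1),
        bnd xj /\ m \in I /\ (forall i, i \in I -> (m <= i)%N) /\
        (forall i : 'I_d.-1, (i < m)%N -> xj i = 1%N) /\ xj m = 0%N /\
        (forall y : gapvec d, cls eps0 (r j) y <->
           (bnd y /\ forall i, (i \in I -> y i = xj i) /\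
                               (i \notin I -> (xj i <= y i)%N)))) /\
    (* (ii) the cells S_j *)
    (forall j : 'I_d.-1, exists m : 'I_k, forall y : gapvec d, cls eps0 (r m) y <-> S_cell j y) /\
    (* (iii) distinct cells have distinct kernels when c >= d *)
    (forall (c : capacity) (eps : R), cap_ge c d -> 0 < eps < 1 ->
        forall x y : gapvec d, bnd x -> bnd y -> law_eq eps c x y -> law_eq eps0 None x y).
Proof.
move=> _ he0; exists #|class_codes d|, (@class_rep d).
split; first exact: class_rep_bnd.
split.
  move=> x /bnd_reduce /(class_repP (reduce_reduced x)) [j hj].
  by exists j; apply: law_eq_reduce; rewrite hj reduce_idem.
split.
  move=> j m /(law_eqE _ _ he0).
  rewrite (reduced_id (class_rep_reduced j)) (reduced_id (class_rep_reduced m)).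
  exact: class_rep_inj.
split.
  by move=> eps1 he1 x y _ _; rewrite (law_eqE _ _ he0) (law_eqE _ _ he1).
split.
  by move=> eps c _ _ x y _ _ /(law_eqE _ _ he0); apply: law_eq_reduce.
split.
  by move=> j; apply: cell_shape he0 (class_rep_reduced j) (class_rep_bnd j).
split.
  move=> j; have [m hm] := class_repP (S_cell_rep_reduced j) (S_cell_rep_bnd j).
  by exists m => y; rewrite hm clsE //; [exact: S_cell_repE | exact: S_cell_rep_reduced].
move=> c eps hc he x y _ _ /(law_eq_cap_ge hc) /(law_eqE _ _ he).
by move/(law_eqE _ _ he0).
Qed.
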